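(* Let $n\ge 1$. If the Zeckendorf game on $n$, starting from $\{F_1^n\}$, can be played to the Zeckendorf decomposition of $n$ using only splitting moves and $C_1$ moves, then $n=F_k-1$ for some $k\ge 2$.
   Context: Fibonacci numbers are indexed by $F_1=1$, $F_2=2$, $F_{i+1}=F_i+F_{i-1}$. A game state is a finite multiset of Fibonacci numbers (tracked by index); $\{F_1^n\}$ denotes $n$ copies of $F_1$. The legal moves are: $C_1$: replace $F_1,F_1$ by $F_2$; for $i\ge 2$, $C_i$: replace $F_{i-1},F_i$ by $F_{i+1}$ (a ''combining move''); $S_2$: replace $F_2,F_2$ by $F_1,F_3$; for $i\ge 3$, $S_i$: replace $F_i,F_i$ by $F_{i-2},F_{i+1}$ (a ''splitting move''). The game on $n$ starts at $\{F_1^n\}$ and ends when no legal move is available, which happens exactly at the Zeckendorf decomposition of $n$ (the unique representation of $n$ as a sum of $F_i$'s with distinct, pairwise non-consecutive indices). *)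

From mathcomp Require Import all_boot.
Set Implicit Arguments. Unset Strict Implicit. Unset Printing Implicit Defensive.

(* Fibonacci numbers with the paper's indexing: F 1 = 1, F 2 = 2,
   F (i+1) = F i + F (i-1).  (F 0 = 1 is an unused auxiliary value.) *)
Fixpoint fib (i : nat) : nat :=
  match i with
  | 0 => 1
  | 1 => 1
  | j.+1 => (match j with 0 => 1 | k.+1 => fib j + fib k end)
  end.

(* A game state: a multiset of Fibonacci numbers tracked by index,
   given as the multiplicity function  index -> count  (index 0 unused). *)
Definition state := nat -> nat.

Definition replaces (rem : seq nat) (add : seq nat) (s s' : state) : Prop :=
  (forall j, count_mem j rem <= s j) /\
  (forall j, s' j = s j - count_mem j rem + count_mem j add).

Definition move_C (i : nat) (s s' : state) : Prop :=
  if i == 1 then replaces [:: 1; 1] [:: 2] s s'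
  else (2 <= i) /\ replaces [:: i.-1; i] [:: i.+1] s s'.

Definition move_S (i : nat) (s s' : state) : Prop :=
  if i == 2 then replaces [:: 2; 2] [:: 1; 3] s s'
  else (3 <= i) /\ replaces [:: i; i] [:: i - 2; i.+1] s s'.

Definition split_or_C1_move (s s' : state) : Prop :=
  move_C 1 s s' \/ exists i, move_S i s s'.

Inductive reaches (R : state -> state -> Prop) : state -> state -> Prop :=
  | reaches_refl s : reaches R s s
  | reaches_step s t u : R s t -> reaches R t u -> reaches R s u.

Definition init_state (n : nat) : state := fun j => if j == 1 then n else 0.

Definition zeckendorf_state (n : nat) (z : state) : Prop :=
  exists I : seq nat,
    [/\ uniq I, all (fun i => 1 <= i) I,
        (forall i j, i \in I -> j \in I -> i != j.+1),
        \sum_(i <- I) fib i = n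
      & forall j, z j = (j \in I)].

Example fib_test : [seq fib i | i <- iota 1 7] = [:: 1; 2; 3; 5; 8; 13; 21].
Proof. by []. Qed.

From mathcomp Require Import all_boot zify.

(* Write mass s j = F_1 s_1 + ... + F_j s_j for the total value
   of the parts of index at most j in a state s.  Call s saturated when every
   index j lying strictly below some occupied index satisfies
   F_j <= mass s j + 1.  The initial state {F_1^n} is saturated, and every
   C_1 move and every splitting move preserves saturation (this is the only
   place where the restriction on moves is used: a combining move C_i,
   i >= 2, can empty the low indices).  So the final Zeckendorf state z is
   saturated.  If M >= 2 is its top index, then z_(M-1) = 0 and the classical
   Zeckendorf bound gives mass z (M-2) < F_(M-1); saturation at M-1 forces
   mass z (M-2) = F_(M-1) - 1, whence n = mass z M = F_(M+1) - 1 (the case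
   M = 1 is n = 1 = F_2 - 1). *)

Set Implicit Arguments.
Unset Strict Implicit.
Unset Printing Implicit Defensive.

Lemma fibSS i : fib i.+2 = fib i.+1 + fib i.
Proof. by []. Qed.

Definition mass (s : state) (j : nat) : nat := \sum_(1 <= x < j.+1) s x * fib x.

Lemma mass0 s : mass s 0 = 0.
Proof. by rewrite /mass big_geq. Qed.

Lemma massS s j : mass s j.+1 = mass s j + s j.+1 * fib j.+1.
Proof. by rewrite /mass big_nat_recr. Qed.

Lemma mass_single a j : mass (fun x => a == x) j = (0 < a <= j) * fib a.
Proof.
elim: j => [|j IH]; first by rewrite mass0; case: a.
by rewrite massS IH; case: (eqVneq a j.+1) => [->|ne]; lia.
Qed.

Lemma mass_count (l : seq nat) j :
  mass (fun x => count_mem x l) j = \sum_(a <- l) (0 < a <= j) * fib a.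
Proof.
elim: l => [|a l IH]; first by rewrite big_nil; apply: big1.
rewrite big_cons -IH -mass_single /mass -big_split /=.
by apply: eq_bigr => x _; rewrite mulnDl.
Qed.

Lemma mass_replaces j rem add s s' : replaces rem add s s' ->
  mass s' j + \sum_(a <- rem) (0 < a <= j) * fib a =
  mass s j + \sum_(a <- add) (0 < a <= j) * fib a.
Proof.
case=> sub_rem def_s'; rewrite -!mass_count /mass -!big_split /=.
apply: eq_bigr => x _; rewrite -!mulnDl def_s' -addnA [_ + count_mem x rem]addnC.
by rewrite addnA subnK.
Qed.

Lemma part_le_mass s j x : 1 <= x <= j -> s x * fib x <= mass s j.
Proof.
elim: j => [|j IH]; first lia.
rewrite massS; case: (eqVneq x j.+1) => [-> _|ne xj]; first exact: leq_addl.
by apply: leq_trans (leq_addr _ _); apply: IH; lia.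
Qed.

Lemma replaces_other rem add s s' k :
  replaces rem add s s' -> k \notin rem -> k \notin add -> s' k = s k.
Proof.
case=> _ /(_ k) ->; rewrite -!has_pred1 !has_count -!leqNgt !leqn0.
by move=> /eqP-> /eqP->; rewrite subn0 addn0.
Qed.

Definition saturated (s : state) : Prop :=
  forall j k, j < k -> 0 < s k -> fib j <= mass s j + 1.

(* Since F_0 = F_1 = 1, only the indices j >= 2 need checking. *)
Lemma saturated_from2 s :
  (forall j k, 2 <= j -> j < k -> 0 < s k -> fib j <= mass s j + 1) ->
  saturated s.
Proof.
by move=> sat [|[|j]] k jk sk; [exact: leq_addl|exact: leq_addl|apply: sat jk sk].
Qed.

(* C_1 does not change mass j for j >= 2, nor any index above 2. *)
Lemma saturated_C1 s s' :
  replaces [:: 1; 1] [:: 2] s s' -> saturated s -> saturated s'.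
Proof.
move=> mv sat; apply: saturated_from2 => j k j2 jk s'k.
have := mass_replaces j mv; rewrite !big_cons !big_nil [fib 1]/= [fib 2]/=.
have s_k : s' k = s k by apply: (replaces_other mv); rewrite !inE; lia.
have := sat j k jk; lia.
Qed.

(* S_2 preserves mass j for j >= 3; at j = 2 the new part F_1 suffices. *)
Lemma saturated_S2 s s' :
  replaces [:: 2; 2] [:: 1; 3] s s' -> saturated s -> saturated s'.
Proof.
move=> mv sat; apply: saturated_from2 => j k j2 jk s'k.
have := mass_replaces j mv; rewrite !big_cons !big_nil [fib 1]/= [fib 2]/= [fib 3]/=.
case: (leqP j 2) => [j_le2 _|j3].
  have -> : j = 2 by lia.
  have s'1 := proj2 mv 1; rewrite /= in s'1.
  have := part_le_mass s' (j := 2) (x := 1); rewrite [fib 1]/= [fib 2]/=; lia.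
have s_k : s' k = s k by apply: (replaces_other mv); rewrite !inE; lia.
have := sat j k jk; lia.
Qed.

(* S_i, i >= 3: below i the mass does not decrease and index i was occupied;
   above i the mass is unchanged; at j = i the two removed copies of F_i
   were worth more than F_(i-1), and 2 F_i - F_(i-2) = F_(i+1). *)
Lemma saturated_S i s s' :
  3 <= i -> replaces [:: i; i] [:: i - 2; i.+1] s s' -> saturated s -> saturated s'.
Proof.
case: i => [|[|[|m]]] // _; rewrite (_ : m.+3 - 2 = m.+1) // => mv sat.
apply: saturated_from2 => j k j2 jk s'k.
have := mass_replaces j mv; rewrite !big_cons !big_nil.
have := fibSS m.+1; have := fibSS m.+2.
have s_i : 2 <= s m.+3 by have := mv.1 m.+3; rewrite /= eqxx.
case: (ltngtP j m.+3) => [ji|ij|->].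
- have := sat j m.+3 ji; lia.
- have s_k : s' k = s k by apply: (replaces_other mv); rewrite !inE; lia.
  have := sat j k jk; lia.
- rewrite [mass s m.+3]massS; have := sat m.+2 m.+3 (ltnSn _).
  have : 2 * fib m.+3 <= s m.+3 * fib m.+3 by rewrite leq_mul2r s_i orbT.
  lia.
Qed.

Lemma saturated_step s s' :
  split_or_C1_move s s' -> saturated s -> saturated s'.
Proof.
case=> [mv|[i]]; first exact: saturated_C1.
by rewrite /move_S; case: eqP => [_|_ [i3]]; [exact: saturated_S2|exact: saturated_S].
Qed.

Lemma saturated_reaches s t :
  reaches split_or_C1_move s t -> saturated s -> saturated t.
Proof. by elim=> // a b c ab _ IH sat_a; apply/IH/(saturated_step ab). Qed.

(* In {F_1^n} only index 1 is occupied, and F_0 = 1. *)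
Lemma saturated_init n : saturated (init_state n).
Proof.
move=> j k; rewrite /init_state; case: eqP => // -> jk _.
by case: j jk => // _; rewrite mass0.
Qed.

Definition sparse (z : state) : Prop :=
  (forall x, z x <= 1) /\ (forall x, z x = 0 \/ z x.+1 = 0).

Lemma sparse_mass_lt z j : sparse z -> mass z j < fib j.+1.
Proof.
case=> le1 nonadj; suff: mass z j < fib j.+1 /\ mass z j.+1 < fib j.+2 by case.
elim: j => [|j [IH1 IH2]].
  by rewrite massS mass0 [fib 1]/= [fib 2]/=; have := le1 1; lia.
split => //; rewrite massS; have := fibSS j.+1.
have : z j.+2 * fib j.+2 <= fib j.+2 by rewrite -[leqRHS]mul1n leq_mul2r le1 orbT.
by case: (nonadj j.+1) => [zj1|->]; [rewrite massS zj1|]; lia.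
Qed.

Lemma saturated_sparse_mass z M :
  sparse z -> saturated z -> 1 <= M -> z M = 1 -> mass z M = fib M.+1 - 1.
Proof.
move=> sp sat; case: M => [|[|m]] // _ zM; first by rewrite massS mass0 zM.
have zm : z m.+1 = 0 by case: (proj2 sp m.+1); rewrite // zM.
have low := sat m.+1 m.+2 (ltnSn _); rewrite massS zm zM in low.
have := sparse_mass_lt m sp; have := fibSS m.+1.
rewrite massS massS zm zM; lia.
Qed.

Lemma zeckendorf_sparse (I : seq nat) (z : state) :
  (forall i j, i \in I -> j \in I -> i != j.+1) ->
  (forall j, z j = (j \in I)) -> sparse z.
Proof.
move=> nonadj zI; split=> [x|x]; first by rewrite zI leq_b1.
rewrite !zI; case xI: (x \in I); last by left.
case x1I: (x.+1 \in I); last by right.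
by have := nonadj _ _ x1I xI; rewrite eqxx.
Qed.

Lemma sum_fib_mass (I : seq nat) (z : state) M :
  uniq I -> (forall i, i \in I -> 1 <= i <= M) -> (forall j, z j = (j \in I)) ->
  \sum_(i <- I) fib i = mass z M.
Proof.
move=> uI boundI zI.
have permI : perm_eq I [seq x <- index_iota 1 M.+1 | x \in I].
  apply: uniq_perm => //; first by rewrite filter_uniq // iota_uniq.
  move=> x; rewrite mem_filter mem_index_iota.
  by case xI: (x \in I) => //=; have := boundI x xI; lia.
rewrite (perm_big _ permI) big_filter big_mkcond /mass.
by apply: eq_bigr => x _; rewrite zI; case: (x \in I); rewrite ?mul1n.
Qed.

Lemma max_mem (I : seq nat) :
  I != [::] -> exists2 M : nat, M \in I & forall i, i \in I -> i <= M.
Proof.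
case: I => // a I _.
have exI : exists i, i \in a :: I by exists a; rewrite mem_head.
have ubI : forall i, i \in a :: I -> i <= \max_(j <- a :: I) j.
  by move=> i iI; apply: (leq_bigmax_seq (F := id)).
by case: (ex_maxnP exI ubI) => M; exists M.
Qed.

Theorem lemma3p2 (n : nat) :
  1 <= n ->
  (exists z, zeckendorf_state n z /\ reaches split_or_C1_move (init_state n) z) ->
  exists k, 2 <= k /\ n = fib k - 1.
Proof.
move=> n_pos [z [[I [uI posI nonadj sumI zI]] play]].
have I_nonempty : I != [::] by apply: contraTneq n_pos => I0; rewrite -sumI I0 big_nil.
have [M MI topM] := max_mem I_nonempty.
have M_pos : 1 <= M by move/allP: posI => /(_ M MI).
have n_mass : n = mass z M.
  rewrite -sumI; apply: sum_fib_mass => // i iI; rewrite topM // andbT.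
  by move/allP: posI => /(_ i iI).
have sat := saturated_reaches play (@saturated_init n).
have sp := zeckendorf_sparse nonadj zI.
exists M.+1; split; first by [].
by rewrite n_mass (saturated_sparse_mass sp sat M_pos) // zI MI.
Qed.
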